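(* Let $(X,S)$ be the periodic Tri-tris transformation semigroup on the $3\times 4$ board (width $3$, height $4$) with piece set $P=\{\mathrm{RS},\mathrm{LUS},\mathrm{RUS},\mathrm{V}\}$. There is a $5$-element set $Z\subseteq X$ of game states, containing the empty board $e$, and there are elements $g_1,g_2\in S$ such that $Z\cdot g_1=Z$ and $Z\cdot g_2=Z$. The restriction of $g_1$ to $Z$ is a $5$-cycle. The restriction of $g_2$ to $Z$ is a product of a disjoint $3$-cycle (containing $e$) and a transposition. Consequently, the permutations of $Z$ induced by elements of $S$ that map $Z$ onto itself form the full symmetric group $S_5$ on $Z$. In particular, this group contains the alternating group $A_5$, a finite simple nonabelian group.
   Context: Board: a grid of $n=3$ columns, indexed $0,1,2$, and $k=4$ rows. A game state is a subset of filled cells of this grid. Pieces are sets of connected cells. - $\mathrm{V}$ is the vertical straight triomino: three cells stacked in one column. - The other pieces are orientations of the L-shaped triomino, i.e. a $2\times 2$ square with one cell removed. - $\mathrm{RS}$ has two cells in its bottom row and one cell above the right one. - $\mathrm{LUS}$ has two cells in its top row and one cell below the left one. - $\mathrm{RUS}$ has two cells in its top row and one cell below the right one. - (The fourth orientation, $\mathrm{LS}$, has one cell above the left bottom cell; it is not used here.) Basic events: a basic event is a pair $\sigma=(p,\xi)$ with $p\in P$ and $\xi$ a column index such that the piece fits horizontally when its leftmost cells are placed in column $\xi$. The state $x\cdot\sigma$ is obtained as follows. 1. Drop $p$ vertically, without rotation or sliding, with its leftmost cells in column $\xi$, from above the board until it rests on the floor or on filled cells. 2. Repeatedly remove any completely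 filled row, moving all cells above it down one row. 3. If the piece cannot be placed entirely within the $k$ rows, the result is the game-over outcome. In the periodic variant, the game-over outcome is replaced by the empty board $e$, so $x\cdot\sigma=e$. $X$ is the set of states reachable from $e$ by finite sequences of basic events. $S$ is the transformation semigroup on $X$ generated by the basic events, with product $\sigma_1\sigma_2$ meaning apply $\sigma_1$ first and then $\sigma_2$. *)

From mathcomp Require Import all_boot.
Set Implicit Arguments. Unset Strict Implicit. Unset Printing Implicit Defensive.

Inductive piece := RS | LUS | RUS | V.

(* Cells of a piece as offsets (dx, dy) from its lower-left corner;
   dx = column offset (to the right), dy = row offset (upwards). *)
Definition offsets (p : piece) : seq (nat * nat) :=
  match p with
  | RS  => [:: (0, 0); (1, 0); (1, 1)]
  | LUS => [:: (0, 1); (1, 1); (0, 0)]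
  | RUS => [:: (0, 1); (1, 1); (1, 0)]
  | V   => [:: (0, 0); (0, 1); (0, 2)]
  end.

Definition pwidth (p : piece) : nat := match p with V => 1 | _ => 2 end.
Definition pheight (p : piece) : nat := match p with V => 3 | _ => 2 end.

(* Board: n = 3 columns, k = 4 rows; row 0 is the floor row. *)
Definition ncols := 3.
Definition nrows := 4.
Definition cell := ('I_ncols * 'I_nrows)%type.
Definition state := {set cell}.
Definition empty_board : state := set0.

(* A basic event (p, xi): leftmost cells of p in column xi. *)
Definition event := (piece * nat)%type.
Definition valid_event (ev : event) : bool := ev.2 + pwidth ev.1 <= ncols.

Definition filled (x : state) (c r : nat) : bool :=
  [exists q : cell, [&& q \in x, q.1 == c :> nat & q.2 == r :> nat]].

Definition colheight (x : state) (c : nat) : nat :=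
  \max_(r < nrows | filled x c r) r.+1.

(* row of the lowest line of the piece once it has been dropped from above *)
Definition landing (x : state) (p : piece) (xi : nat) : nat :=
  \max_(o <- offsets p) (colheight x (xi + o.1) - o.2).

Definition placed (x : state) (p : piece) (xi : nat) (c r : nat) : bool :=
  filled x c r ||
  has (fun o => (xi + o.1 == c) && (landing x p xi + o.2 == r)) (offsets p).

Definition fullrow (f : nat -> nat -> bool) (r : nat) : bool :=
  all (fun c => f c r) (iota 0 ncols).

(* remove all completely filled rows, moving the cells above them down *)
Definition clear_rows (f : nat -> nat -> bool) : state :=
  let keep := [seq r <- iota 0 nrows | ~~ fullrow f r] in
  [set q : cell | f q.1 (nth nrows keep q.2)].

(* periodic variant: game over is replaced by the empty board *)
Definition step (x : state) (ev : event) : state :=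
  let: (p, xi) := ev in
  if nrows < landing x p xi + pheight p then empty_board
  else clear_rows (placed x p xi).

(* action of the product sigma_1 ... sigma_m (sigma_1 applied first) *)
Definition act_word (x : state) (w : seq event) : state := foldl step x w.

(* elements of S are the products of nonempty sequences of basic events *)
Definition word_in_S (w : seq event) : bool := (0 < size w) && all valid_event w.

(* X: states reachable from the empty board *)
Definition reachable (x : state) : Prop :=
  exists w : seq event, all valid_event w /\ x = act_word empty_board w.

From mathcomp Require Import all_boot zify.
Set Implicit Arguments. Unset Strict Implicit. Unset Printing Implicit Defensive.

(* The theorem is a finite statement about the 2^12 states of the 3 x 4 board,
   but the dynamics are written with locked finset/bigop operations
   that do not evaluate.  We therefore first build an executable bit-board
   model: a state is coded by its 12 cell bits (row-major), one step of the
   game is mirrored by a computable function on codes (code_step), and the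
   coding is injective (code_inj).  Equalities between game states are then
   decided by evaluation.
   With the generators g1 = [V@0; V@2; LUS@1] and g2 = [V@0; LUS@0; V@2; LUS@1]
   the orbit Z = {e, e.g1, ..., e.g1^4} of the empty board is computed; g1
   acts on Z as the 5-cycle (0 1 2 3 4) and g2 as (0 2 3)(1 4) on the indices.
   Every word over {g1, g2} then acts on Z by the composite index permutation
   (word_of_act), and an exhaustive search over the 1022 generator words of
   length 1..9 reaches all 120 permutations of the five indices (search_covers),
   which yields the symmetric group on Z. *)

Definition grid := nat -> nat -> bool.

Definition grid_colheight (f : grid) (c : nat) : nat :=
  foldr maxn 0 [seq r.+1 | r <- iota 0 nrows & f c r].

Definition grid_landing (f : grid) (p : piece) (xi : nat) : nat :=
  foldr maxn 0 [seq grid_colheight f (xi + o.1) - o.2 | o <- offsets p].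

Definition grid_placed (f : grid) (p : piece) (xi : nat) : grid := fun c r =>
  f c r || has (fun o => (xi + o.1 == c) && (grid_landing f p xi + o.2 == r))
               (offsets p).

(* Line clearing, cut off at the board so that it describes a genuine state. *)
Definition grid_clear (g : grid) : grid := fun c r =>
  [&& c < ncols, r < nrows &
      g c (nth nrows [seq r' <- iota 0 nrows | ~~ fullrow g r'] r)].

Definition grid_step (f : grid) (ev : event) : grid :=
  let: (p, xi) := ev in
  if nrows < grid_landing f p xi + pheight p then fun _ _ => false
  else grid_clear (grid_placed f p xi).

Definition encode (f : grid) : seq bool :=
  [seq f (i %% ncols) (i %/ ncols) | i <- iota 0 (ncols * nrows)].

Definition decode (s : seq bool) : grid := fun c r =>
  [&& c < ncols, r < nrows & nth false s (r * ncols + c)].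

Definition code (x : state) : seq bool := encode (filled x).

Definition code_step (s : seq bool) (ev : event) : seq bool :=
  encode (grid_step (decode s) ev).

Lemma colheightE x f c : filled x =2 f -> colheight x c = grid_colheight f c.
Proof.
move=> hf; rewrite /colheight /grid_colheight /nrows.
rewrite big_mkcond !big_ord_recr big_ord0 /= !hf.
by case: (f c 0); case: (f c 1); case: (f c 2); case: (f c 3).
Qed.

Lemma landingE x f p xi : filled x =2 f -> landing x p xi = grid_landing f p xi.
Proof.
move=> hf; rewrite /landing /grid_landing.
by case: p; rewrite !big_cons big_nil /= !(colheightE _ hf).
Qed.

Lemma filled_clear_rows g c r : filled (clear_rows g) c r = grid_clear g c r.
Proof.
apply/existsP/idP => [[q /and3P[]] | /and3P[hc hr hg]].
  by rewrite inE => hq /eqP <- /eqP <-; rewrite /grid_clear !ltn_ord.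
by exists (Ordinal hc, Ordinal hr); rewrite inE /= hg !eqxx.
Qed.

Lemma filled_empty : filled empty_board =2 (fun _ _ => false).
Proof. by move=> c r; apply/existsP => -[q]; rewrite inE. Qed.

Lemma filled_step x f ev :
  filled x =2 f -> filled (step x ev) =2 grid_step f ev.
Proof.
move=> hf c r; case: ev => p xi; rewrite /step /grid_step (landingE p xi hf).
case: ifP => _; first by rewrite filled_empty.
have hp : placed x p xi =2 grid_placed f p xi.
  by move=> c' r'; rewrite /placed /grid_placed hf (landingE p xi hf).
have hfull : fullrow (placed x p xi) =1 fullrow (grid_placed f p xi).
  by move=> r'; apply: eq_all => c'; rewrite hp.
by rewrite filled_clear_rows /grid_clear (eq_filter (fun r' => congr1 negb (hfull r'))) hp.
Qed.

Lemma filled_bound x c r : filled x c r -> (c < ncols) && (r < nrows).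
Proof. by case/existsP=> q /and3P[_ /eqP <- /eqP <-]; rewrite !ltn_ord. Qed.

Lemma filled_mem x (q : cell) : filled x q.1 q.2 = (q \in x).
Proof.
apply/existsP/idP => [[[a b] /and3P[hq /eqP/val_inj ea /eqP/val_inj eb]] | hq].
  by case: q ea eb => a' b' /= <- <-.
by exists q; rewrite hq !eqxx.
Qed.

Lemma decode_encode g c r :
  decode (encode g) c r = [&& c < ncols, r < nrows & g c r].
Proof.
rewrite /decode /encode /ncols /nrows.
case: (ltnP c 3) => hc //; case: (ltnP r 4) => hr //; rewrite !andTb.
rewrite (nth_map 0) ?size_iota ?nth_iota; try lia.
have -> : (0 + (r * 3 + c)) %% 3 = c by lia.
by have -> : (0 + (r * 3 + c)) %/ 3 = r by lia.
Qed.

Lemma code_stepE x ev : code (step x ev) = code_step (code x) ev.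
Proof.
rewrite /code /code_step; apply: eq_map => i; apply: filled_step => c r.
rewrite decode_encode; case h: (filled x c r); last by rewrite !andbF.
by rewrite andbT (filled_bound h).
Qed.

Lemma code_act x w : code (act_word x w) = foldl code_step (code x) w.
Proof. by elim: w x => [|ev w IH] x //=; rewrite IH code_stepE. Qed.

Lemma code_inj : injective code.
Proof.
move=> x y h; apply/setP => q; rewrite -!filled_mem.
by have := congr1 (fun s => decode s q.1 q.2) h; rewrite /code !decode_encode !ltn_ord.
Qed.

Lemma act_word_cat x w w' : act_word x (w ++ w') = act_word (act_word x w) w'.
Proof. exact: foldl_cat. Qed.

Lemma act_word_iter x w i :
  iter i (act_word^~ w) x = act_word x (flatten (nseq i w)).
Proof. by elim: i x => [|i IH] x //; rewrite iterSr IH -act_word_cat. Qed.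

Definition g1 : seq event := [:: (V, 0); (V, 2); (LUS, 1)].
Definition g2 : seq event := [:: (V, 0); (LUS, 0); (V, 2); (LUS, 1)].
Definition gen (b : bool) : seq event := if b then g1 else g2.

Lemma gen_in_S b : word_in_S (gen b).
Proof. by case: b. Qed.

Definition zst (i : nat) : state := iter i (act_word^~ g1) empty_board.
(* Comparing two distinct zst i by conversion would run the (locked) game
   itself, so simplification must not unfold zst; all identities between
   the zst i are obtained through code_inj instead. *)
Arguments zst : simpl never.
Definition zs : seq state := mkseq zst 5.
Definition Z : {set state} := [set z in zs].

Definition zcode (i : nat) : seq bool :=
  iter i (foldl code_step ^~ g1) (nseq (ncols * nrows) false).

Lemma code_zst i : code (zst i) = zcode i.
Proof.
elim: i => [|i IH]; last by rewrite /zst iterS code_act -/(zst i) IH.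
by rewrite /code /encode (eq_map (fun i => filled_empty _ _)).
Qed.

Lemma nth_zs i : i < 5 -> nth empty_board zs i = zst i.
Proof. exact: nth_mkseq. Qed.

Lemma zst_index z : z \in zs -> zst (index z zs) = z.
Proof. by move=> hz; rewrite -nth_zs ?index_mem // nth_index. Qed.

Lemma uniq_zs : uniq zs.
Proof.
by rewrite -(map_inj_uniq code_inj) -map_comp (eq_map code_zst); vm_compute.
Qed.

Lemma mem_zst i : i < 5 -> zst i \in Z.
Proof. by move=> hi; rewrite inE -nth_zs // mem_nth ?size_mkseq. Qed.

Lemma index_zst i : i < 5 -> index (zst i) zs = i.
Proof. by move=> hi; rewrite -nth_zs // index_uniq ?size_mkseq // uniq_zs. Qed.

Definition gperm (b : bool) : seq nat :=
  if b then [:: 1; 2; 3; 4; 0] else [:: 2; 4; 3; 0; 1].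

Lemma gen_act b i : i < 5 -> act_word (zst i) (gen b) = zst (nth 0 (gperm b) i).
Proof.
move=> hi; apply: code_inj; rewrite code_act !code_zst.
have table : all (fun j => foldl code_step (zcode j) (gen b) == zcode (nth 0 (gperm b) j))
                 (iota 0 5) by case: b; vm_compute.
by apply/eqP; apply: (allP table); rewrite mem_iota.
Qed.

(* A word over the generators (true for g1, false for g2), the element of S
   it denotes, and the index map it induces on Z. *)
Definition word_of (g : seq bool) : seq event := flatten (map gen g).
Definition perm_of (g : seq bool) (i : nat) : nat :=
  foldl (fun j b => nth 0 (gperm b) j) i g.

Lemma word_of_valid g : all valid_event (word_of g).
Proof.
by elim: g => //= b g IH; rewrite all_cat IH andbT; have /andP[] := gen_in_S b.
Qed.

Lemma word_of_in_S g : 0 < size g -> word_in_S (word_of g).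
Proof.
rewrite /word_in_S word_of_valid andbT /word_of; case: g => // b g _ /=.
by rewrite size_cat addn_gt0; have /andP[->] := gen_in_S b.
Qed.

Lemma word_of_act g i :
  i < 5 -> act_word (zst i) (word_of g) = zst (perm_of g i) /\ perm_of g i < 5.
Proof.
elim: g i => [|b g IH] i hi //=.
rewrite act_word_cat gen_act //; apply: IH.
by case: b; case: i hi => [|[|[|[|[|]]]]].
Qed.

Lemma imset_Z (w : seq event) (p : seq nat) :
  perm_eq p (iota 0 5) ->
  (forall i, i < 5 -> act_word (zst i) w = zst (nth 0 p i)) ->
  [set act_word z w | z in Z] = Z.
Proof.
move=> pp hw; have size_p : size p = 5 by rewrite (perm_size pp) size_iota.
have mem_p j : (j \in p) = (j < 5) by rewrite (perm_mem pp) mem_iota.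
apply/setP => z; apply/imsetP/idP => [[y] | hz].
  rewrite inE => hy ->; rewrite -(zst_index hy) hw ?index_mem //.
  by apply: mem_zst; rewrite -mem_p mem_nth // size_p index_mem.
move: hz; rewrite inE => hz; rewrite -(zst_index hz); set j := index z zs.
have hj : j \in p by rewrite mem_p index_mem.
exists (zst (index j p)); first by apply: mem_zst; rewrite -size_p index_mem.
by rewrite hw ?nth_index // -size_p index_mem.
Qed.

Lemma gen_imset b : [set act_word z (gen b) | z in Z] = Z.
Proof. by apply: (imset_Z _ (gen_act b)); case: b. Qed.

Lemma zst_reachable i : reachable (zst i).
Proof.
have pow_g1 : word_of (nseq i true) = flatten (nseq i g1) by rewrite /word_of map_nseq.
exists (word_of (nseq i true)); split; first exact: word_of_valid.
by rewrite pow_g1 /zst act_word_iter.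
Qed.

Lemma card_Z : #|Z| = 5.
Proof. by rewrite cardsE (card_uniqP uniq_zs) size_mkseq. Qed.

Lemma set_mkseq5 (T : finType) (f : nat -> T) :
  [set x in mkseq f 5] = [set f 0; f 1; f 2; f 3; f 4].
Proof. by apply/setP => x; rewrite !inE /= !orbA. Qed.

Lemma Z_enum : Z = [set zst 0; zst 1; zst 2; zst 3; zst 4].
Proof. exact: set_mkseq5. Qed.

Lemma set5_perm (T : finType) (a b c d e : T) :
  [set a; b; c; d; e] = [set a; c; d; b; e].
Proof.
apply/setP => x; rewrite !inE.
by case: (x == a); case: (x == b); case: (x == c); case: (x == d).
Qed.

Fixpoint bool_words (n : nat) : seq (seq bool) :=
  if n is n'.+1 then [seq b :: g | b <- [:: true; false], g <- bool_words n']
  else [:: [::]].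

Definition search_space : seq (seq bool) := flatten [seq bool_words k | k <- iota 1 9].

Lemma search_covers :
  all (fun s => has (fun g => (0 < size g) && (map (perm_of g) (iota 0 5) == s))
                    search_space)
      (permutations (iota 0 5)).
Proof. by vm_compute. Qed.

Lemma index_perm (f : state -> state) :
  {in Z, forall z, f z \in Z} -> {in Z &, injective f} ->
  [seq index (f (zst i)) zs | i <- iota 0 5] \in permutations (iota 0 5).
Proof.
move=> fZ finj; rewrite mem_permutations.
have lt5 i : (i \in iota 0 5) = (i < 5) by rewrite mem_iota.
have fZs i : i < 5 -> f (zst i) \in zs by move=> hi; have := fZ _ (mem_zst hi); rewrite inE.
have uniq_s : uniq [seq index (f (zst i)) zs | i <- iota 0 5].
  rewrite map_inj_in_uniq ?iota_uniq // => i j; rewrite !lt5 => hi hj eq_ij.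
  have : f (zst i) = f (zst j) by rewrite -(nth_index empty_board (fZs i hi)) eq_ij nth_index ?fZs.
  by move/finj => /(_ (mem_zst hi) (mem_zst hj)) /(congr1 (index^~ zs)); rewrite !index_zst.
have sub_s : {subset [seq index (f (zst i)) zs | i <- iota 0 5] <= iota 0 5}.
  by move=> k /mapP[i]; rewrite !lt5 => hi ->; rewrite -(size_mkseq zst 5) index_mem fZs.
have size_s : size (iota 0 5) <= size [seq index (f (zst i)) zs | i <- iota 0 5].
  by rewrite size_map.
have [_ eq_s] := uniq_min_size uniq_s sub_s size_s.
exact: uniq_perm uniq_s (iota_uniq 0 5) eq_s.
Qed.

Lemma Z_permutations_induced (f : state -> state) :
  {in Z, forall z, f z \in Z} -> {in Z &, injective f} ->
  exists w : seq event, word_in_S w /\ {in Z, forall z, act_word z w = f z}.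
Proof.
move=> fZ finj; have /(allP search_covers)/hasP[g _ /andP[size_g /eqP perm_g]] :=
  index_perm fZ finj.
exists (word_of g); split; first exact: word_of_in_S.
move=> z zZ; have hz := zZ; rewrite inE in hz.
have hi : index z zs < 5 by rewrite -(size_mkseq zst 5) index_mem.
have perm_z : perm_of g (index z zs) = index (f z) zs.
  have := congr1 (nth 0 ^~ (index z zs)) perm_g.
  by rewrite !(nth_map 0) ?size_iota // nth_iota // add0n (zst_index hz).
rewrite -{1}(zst_index hz); have [-> _] := word_of_act g hi.
by rewrite perm_z zst_index //; have := fZ z zZ; rewrite inE.
Qed.

Theorem mainTheorem1 :
  exists Z : {set state},
    [/\ #|Z| = 5, empty_board \in Z & forall z, z \in Z -> reachable z] /\
    exists w1 w2 : seq event,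
      [/\ word_in_S w1, word_in_S w2,
          [set act_word z w1 | z in Z] = Z &
          [set act_word z w2 | z in Z] = Z] /\
      (* g1 restricted to Z is a 5-cycle *)
      (exists z0 z1 z2 z3 z4 : state,
         [/\ Z = [set z0; z1; z2; z3; z4],
             act_word z0 w1 = z1, act_word z1 w1 = z2,
             act_word z2 w1 = z3 & act_word z3 w1 = z4 /\ act_word z4 w1 = z0]) /\
      (* g2 restricted to Z is a 3-cycle through e and a disjoint transposition *)
      (exists a b c d : state,
         [/\ Z = [set empty_board; a; b; c; d],
             act_word empty_board w2 = a, act_word a w2 = b,
             act_word b w2 = empty_board & act_word c w2 = d /\ act_word d w2 = c]) /\
      (* consequently every permutation of Z is induced by an element of S *)
      (forall f : state -> state,
         {in Z, forall z, f z \in Z} -> {in Z &, injective f} ->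
         exists w : seq event, word_in_S w /\ {in Z, forall z, act_word z w = f z}).
Proof.
have g1_act i (hi : i < 5) := gen_act true hi.
have g2_act i (hi : i < 5) := gen_act false hi.
exists Z; split.
  split; [exact: card_Z | exact: (mem_zst (i := 0) erefl) |].
  by move=> z; rewrite inE => /zst_index <-; apply: zst_reachable.
exists g1, g2; split.
  split; [exact: (gen_in_S true) | exact: (gen_in_S false)
         | exact: (gen_imset true) | exact: (gen_imset false)].
split.
  exists (zst 0), (zst 1), (zst 2), (zst 3), (zst 4).
  split; [exact: Z_enum | exact: (g1_act 0) | exact: (g1_act 1) | exact: (g1_act 2) |].
  by split; [exact: (g1_act 3) | exact: (g1_act 4)].
split.
  rewrite -[empty_board]/(zst 0); exists (zst 2), (zst 3), (zst 1), (zst 4).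
  split; [rewrite Z_enum; exact: set5_perm | exact: (g2_act 0) | exact: (g2_act 2)
         | exact: (g2_act 3) |].
  by split; [exact: (g2_act 1) | exact: (g2_act 4)].
exact: Z_permutations_induced.
Qed.
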